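(* Let $b = (b(0), \dots, b(L-1))$ be a solution of length $L$. Then $$b(0) \ge L - \frac{1}{2} - \sqrt{2L + \frac{1}{4}}.$$
   Context: A solution of length $L \ge 1$ is a sequence $(b(0), \dots, b(L-1))$ of integers with $0 \le b(i) < L$ such that for every $0 \le i < L$, $b(i) = |\{ j : 0 \le j < L,\ b(j) = i\}|$. *)

From mathcomp Require Import all_boot.
From Stdlib Require Import Reals.
Set Implicit Arguments. Unset Strict Implicit. Unset Printing Implicit Defensive.

Definition is_solution (L : nat) (b : 'I_L -> 'I_L) : Prop :=
  forall i : 'I_L, nat_of_ord (b i) = #|[pred j : 'I_L | b j == i]|.

From mathcomp Require Import all_boot.
From Stdlib Require Import Reals.
From mathcomp Require Import zify.
From Stdlib Require Import Lra.

Set Implicit Arguments.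
Unset Strict Implicit.
Unset Printing Implicit Defensive.

(* Let k be the number of positive entries of b.  Since b(0) counts the zero
   entries, b(0) = L - k.  Because b(i) counts the j with b(j) = i, we have
   sum_i F(i) b(i) = sum_j F(b(j)) for every weight F; with F = 1 and then
   F = id this gives sum_i i b(i) = sum_j b(j) = L.  The k indices i with
   b(i) > 0 are distinct naturals, so their sum, which is at most
   sum_i i b(i) = L, is at least 0 + 1 + ... + (k - 1) = k(k-1)/2.  Thus
   k(k-1) <= 2L, i.e. k <= 1/2 + sqrt(2L + 1/4). *)

Lemma card_leq_max_ord n (A : {set 'I_n}) (m : 'I_n) :
  (forall i, i \in A -> i <= m) -> #|A| <= m.+1.
Proof.
move=> le_Am; rewrite cardE -(size_map val) -(size_iota 0 m.+1).
apply: uniq_leq_size; first by rewrite (map_inj_uniq val_inj) enum_uniq.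
move=> x /mapP[i]; rewrite mem_enum => Ai ->.
by rewrite mem_iota ltnS le_Am.
Qed.

Lemma bin2_card_leq_sum n (A : {set 'I_n}) : 'C(#|A|, 2) <= \sum_(i in A) i.
Proof.
move cardA: #|A| => k; elim: k A cardA => [//|k IHk] A cardA.
have [m Am] : exists m, m \in A by apply/card_gt0P; rewrite cardA.
have [M AM maxM] := arg_maxnP val Am.
have {}AM : M \in A := AM.
have cardAM : #|A :\ M| = k by move: cardA; rewrite (cardsD1 M A) AM => -[].
have leAM : k.+1 <= M.+1 by rewrite -cardA card_leq_max_ord.
rewrite (big_setD1 M AM) /= binS bin1 addnC.
by apply: leq_add; [rewrite -ltnS | exact: IHk].
Qed.

Lemma sum_mul_card_fiber (I J : finType) (f : I -> J) (F : J -> nat) :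
  \sum_(j : J) F j * #|[pred i | f i == j]| = \sum_(i : I) F (f i).
Proof.
rewrite [RHS](partition_big f predT) //=; apply: eq_bigr => j _.
rewrite -sum1_card big_distrr /= muln1.
by apply: eq_big => [i|i /eqP ->].
Qed.

Section Solution.

Variables (L : nat) (b : 'I_L -> 'I_L).
Hypothesis hb : is_solution b.

Lemma solution_sum_mul (F : 'I_L -> nat) :
  \sum_(i : 'I_L) F i * b i = \sum_(j : 'I_L) F (b j).
Proof.
by rewrite -sum_mul_card_fiber; apply: eq_bigr => i _; rewrite hb.
Qed.

Lemma solution_sum_index_mul : \sum_(i : 'I_L) i * b i = L.
Proof.
rewrite (solution_sum_mul val).
rewrite (eq_bigr (fun j => 1 * b j)) => [|j _]; last by rewrite mul1n.
by rewrite (solution_sum_mul (fun=> 1)) sum1_card card_ord.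
Qed.

Lemma solution_zero_add_card_pos (HL : 0 < L) :
  b (Ordinal HL) + #|[set i | 0 < b i]| = L.
Proof.
rewrite hb -[RHS](card_ord L) -(cardsC [set i | 0 < b i]) addnC.
by congr (_ + _); apply: eq_card => j; rewrite !inE lt0n negbK.
Qed.

Lemma bin2_card_pos_leq : 'C(#|[set i | 0 < b i]|, 2) <= L.
Proof.
apply: leq_trans (bin2_card_leq_sum [set i | 0 < b i]) _.
rewrite -[X in _ <= X]solution_sum_index_mul big_mkcond /=.
apply: leq_sum => i _; rewrite inE.
by case: ifP => // b_pos; rewrite leq_pmulr.
Qed.

End Solution.

Lemma le_sqrt_of_sqr_le (x y : R) : (x * x <= y -> x <= sqrt y)%R.
Proof.
move=> le_xy; apply: Rle_trans (Rle_abs x) _.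
by rewrite -sqrt_Rsqr_abs; apply: sqrt_le_1_alt.
Qed.

Theorem mainTheorem5 (L : nat) (HL : (1 <= L)%N) (b : 'I_L -> 'I_L)
  (hb : is_solution b) :
  (INR L - 1/2 - sqrt (2 * INR L + 1/4) <= INR (nat_of_ord (b (Ordinal HL))))%R.
Proof.
set k := #|[set i | 0 < b i]|.
have b0E : INR L = (INR (b (Ordinal HL)) + INR k)%R.
  by rewrite -plus_INR; congr INR; exact/esym/solution_zero_add_card_pos.
have le_kk : k * k <= 2 * L + k.
  have := mul_bin_diag k 1; rewrite bin1.
  have := bin2_card_pos_leq hb; rewrite -/k; nia.
have /le_INR : (k * k <= 2 * L + k)%coq_nat by apply/leP.
rewrite plus_INR !mult_INR => le_kk_R.
have : (INR k - 1/2 <= sqrt (2 * INR L + 1/4))%R.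
  by apply: le_sqrt_of_sqr_le; simpl INR in le_kk_R; lra.
lra.
Qed.
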